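(* Let $r_0,r_1,r_2\ge 1$ with $r_1<r_0$ and $r_1<r_2$, and let $L=\mathfrak{g}(r_0,r_1,r_2)$. Then $b(L)\le r_1(r_0-r_1)+r_1r_2=r_1(r_0+r_2-r_1)$.
   Context: All Lie algebras are over an algebraically closed field $\mathbf{k}$ of characteristic zero. $\mathcal{P}(r_0,r_1,r_2)$ is the poset on $\{b_1,\dots,b_{r_0},m_1,\dots,m_{r_1},t_1,\dots,t_{r_2}\}$ whose strict relations are exactly $b_i\prec m_j$, $m_j\prec t_k$ and $b_i\prec t_k$ for all $i,j,k$. $\mathfrak{g}(r_0,r_1,r_2)$ denotes the nilpotent Lie poset algebra $\mathfrak{g}^{\prec}(\mathcal{P}(r_0,r_1,r_2))$: the Lie algebra under the commutator bracket spanned by matrix units $E_{p,q}$ with $p\prec q$. The breadth of a Lie algebra $L$ is $b(L)=\max_{x\in L}\operatorname{rank}(\mathrm{ad}_x)$, where $\mathrm{ad}_x=[x,-]$. *)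

From HB Require Import structures.
From mathcomp Require Import all_boot all_order all_algebra.
Set Implicit Arguments. Unset Strict Implicit. Unset Printing Implicit Defensive.
Import GRing.Theory.
Local Open Scope ring_scope.

(* Level of an element of P(r0,r1,r2), elements indexed by 'I_(r0+r1+r2):
   indices 0..r0-1 are b_1..b_r0 (level 0), r0..r0+r1-1 are m_1..m_r1
   (level 1), the rest are t_1..t_r2 (level 2). *)
Definition plevel (r0 r1 : nat) (i : nat) : nat :=
  if (i < r0)%N then 0%N else if (i < r0 + r1)%N then 1%N else 2%N.

Definition pprec (r0 r1 r2 : nat) (i j : 'I_(r0 + r1 + r2)) : bool :=
  (plevel r0 r1 i < plevel r0 r1 j)%N.

(* The Lie poset algebra g(r0,r1,r2), as a row space (in the mxalgebra sense)
   of vectorized n x n matrices: spanned by the matrix units E_{p,q}, p < q. *)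
Definition gspace (F : fieldType) (r0 r1 r2 : nat) :
    'M[F]_((r0 + r1 + r2) * (r0 + r1 + r2)) :=
  (\sum_(p : 'I_(r0 + r1 + r2) | true)
     \sum_(q : 'I_(r0 + r1 + r2) | @pprec r0 r1 r2 p q)
        <<mxvec (delta_mx p q : 'M[F]_(r0 + r1 + r2))>>)%MS.

Definition adm (F : fieldType) (n : nat) (x : 'M[F]_n) (y : 'M[F]_n) : 'M[F]_n :=
  x *m y - y *m x.

(* rank of ad_x : L -> L, i.e. the dimension of ad_x(L) *)
Definition ad_rank (F : fieldType) (r0 r1 r2 : nat)
    (x : 'M[F]_(r0 + r1 + r2)) : nat :=
  \rank (gspace F r0 r1 r2 *m lin_mx (adm x)).

Definition breadth_le (F : fieldType) (r0 r1 r2 k : nat) : Prop :=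
  forall x : 'M[F]_(r0 + r1 + r2),
    (mxvec x <= gspace F r0 r1 r2)%MS -> (@ad_rank F r0 r1 r2 x <= k)%N.

From HB Require Import structures.
From mathcomp Require Import all_boot all_order all_algebra.
From mathcomp Require Import zify.
Set Implicit Arguments. Unset Strict Implicit. Unset Printing Implicit Defensive.
Import GRing.Theory.
Local Open Scope ring_scope.

(* Write x in L as a block matrix with a bottom-to-middle block X01, a
   middle-to-top block X12 and a bottom-to-top block X02, and let a be the
   rank of X01.  For a basis element E_pq of L (p < q in the poset),
   - x E_pq = (column p of x) (x) e_q is nonzero only for p middle, q top; it
     lies in  C (x) <e_k : k top>,  where C is the column space of X01 (dim a);
   - E_pq x = e_p (x) (row q of x) is nonzero only for p bottom, q middle.
     Splitting the bottom coordinate space as B (+) C with dim B = r0 - a,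
     it lies in  B (x) (row q of x)  +  C (x) <e_k : k top>.
   Hence ad_x(L) lies in a space of dimension <= r1 (r0 - a) + r2 a, and since
   a <= r1 < r2 this is at most r1 (r0 - r1) + r1 r2. *)

Section RankOneTensors.
Variable F : fieldType.

Fact adm_is_linear n (x : 'M[F]_n) : linear (adm x).
Proof.
move=> a A B; rewrite /adm mulmxDr mulmxDl -scalemxAr -scalemxAl.
by rewrite scalerBr opprD addrACA.
Qed.
HB.instance Definition _ n (x : 'M[F]_n) :=
  GRing.isSemilinear.Build F 'M[F]_n 'M[F]_n _ (adm x)
    (GRing.semilinear_linear (adm_is_linear x)).

(* The vectorization of the rank-one matrix v^T r, i.e. the tensor v (x) r. *)
Definition outer n (r v : 'rV[F]_n) : 'rV[F]_(n * n) := mxvec (v^T *m r).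

Fact outer_is_linear n (r : 'rV[F]_n) : linear (outer r).
Proof.
move=> a u v; rewrite /outer linearD /= mulmxDl linearZ /= -scalemxAl.
by rewrite !linearD linearZ.
Qed.
HB.instance Definition _ n (r : 'rV[F]_n) :=
  GRing.isSemilinear.Build F 'rV[F]_n 'rV[F]_(n * n) _ (outer r)
    (GRing.semilinear_linear (outer_is_linear r)).

Definition outer_mx n (r : 'rV[F]_n) : 'M[F]_(n, n * n) := lin1_mx (outer r).

Lemma outer_sub m n (U : 'M[F]_(m, n)) (r v : 'rV[F]_n) :
  (v <= U)%MS -> (outer r v <= U *m outer_mx r)%MS.
Proof. by case/submxP=> w ->; rewrite -mul_rV_lin1 -mulmxA submxMl. Qed.

Definition coord_space n (P : pred 'I_n) : 'M[F]_n :=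
  (\sum_(i | P i) <<delta_mx 0 i : 'rV[F]_n>>)%MS.

Lemma coord_spaceP n (P : pred 'I_n) (v : 'rV[F]_n) :
  (forall i, ~~ P i -> v 0 i = 0) -> (v <= coord_space P)%MS.
Proof.
move=> vP; rewrite [v]row_sum_delta (bigID P) /=.
rewrite [X in _ + X]big1 ?addr0; last by move=> i /vP ->; rewrite scale0r.
apply: summx_sub => i Pi; apply: scalemx_sub.
by apply: (sumsmx_sup i) => //; rewrite genmxE.
Qed.

Lemma mxrank_sumsmx (I : finType) (P : pred I) n (B : I -> 'M[F]_n) :
  (\rank (\sum_(i | P i) B i)%MS <= \sum_(i | P i) \rank (B i))%N.
Proof.
apply: (big_ind2 (fun A k => \rank A <= k)%N) => [|A1 k1 A2 k2 h1 h2|//].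
  by rewrite mxrank0.
exact: leq_trans (mxrank_adds_leqif _ _).1 (leq_add h1 h2).
Qed.

Lemma rank_coord_space n (P : pred 'I_n) : (\rank (coord_space P) <= #|P|)%N.
Proof.
apply: leq_trans (mxrank_sumsmx _ _) _; rewrite -sum1_card leq_sum // => i _.
by rewrite mxrank_gen mxrank_delta.
Qed.

Lemma rank_sum_outer (I : finType) (P : pred I) m n (U : 'M[F]_(m, n))
    (r : I -> 'rV[F]_n) :
  (\rank (\sum_(i | P i) <<U *m outer_mx (r i)>>)%MS <= #|P| * \rank U)%N.
Proof.
apply: leq_trans (mxrank_sumsmx _ _) _; rewrite -sum_nat_const leq_sum // => i _.
by rewrite mxrank_gen mxrankM_maxl.
Qed.

Lemma outer_sub_sum n (P : pred 'I_n) m (U : 'M[F]_(m, n)) (r v : 'rV[F]_n) :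
  (forall k, ~~ P k -> r 0 k = 0) -> (v <= U)%MS ->
  (outer r v <= \sum_(k | P k) <<U *m outer_mx (delta_mx 0 k)>>)%MS.
Proof.
move=> rP vU; rewrite /outer {1}[r]row_sum_delta mulmx_sumr linear_sum /=.
apply: summx_sub => k _; rewrite -scalemxAr linearZ /=.
have [Pk | /rP ->] := boolP (P k); last by rewrite scale0r sub0mx.
apply/scalemx_sub/(sumsmx_sup k) => //.
by rewrite genmxE; exact: outer_sub.
Qed.

End RankOneTensors.


Lemma count_iota_const (a : pred nat) (b : bool) m k :
  {in iota m k, a =1 fun=> b} -> count a (iota m k) = (b * k)%N.
Proof.
move=> ab; rewrite (eq_in_count ab).
by case: {ab} b; rewrite ?count_predT ?count_pred0 ?size_iota ?mul1n.
Qed.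

Lemma card_level r0 r1 r2 c :
  #|[pred i : 'I_(r0 + r1 + r2) | plevel r0 r1 i == c]| = nth 0%N [:: r0; r1; r2] c.
Proof.
rewrite -sum1_card -(big_mkord (fun i => plevel r0 r1 i == c) (fun=> 1%N)).
rewrite sum1_count /index_iota subn0 !iotaD !count_cat add0n.
rewrite (@count_iota_const _ (0 == c)%N); last first.
  by move=> i; rewrite mem_iota /plevel => /andP[_ ->].
rewrite (@count_iota_const _ (1 == c)%N); last first.
  by move=> i; rewrite mem_iota /plevel => /andP[h1 h2]; rewrite ltnNge h1 /= h2.
rewrite (@count_iota_const _ (2 == c)%N); last first.
  move=> i; rewrite mem_iota /plevel => /andP[h1 h2].
  by rewrite ltnNge (leq_trans (leq_addr r1 r0) h1) ltnNge h1.
by case: c => [|[|[|c]]] /=; rewrite ?mul0n ?mul1n ?addn0 ?add0n ?nth_nil.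
Qed.

Section Breadth.
Variables (F : fieldType) (r0 r1 r2 : nat).
Local Notation n := (r0 + r1 + r2)%N.
Local Notation lv i := (plevel r0 r1 (nat_of_ord i)).

Lemma plevel_le2 (i : 'I_n) : (lv i <= 2)%N.
Proof. by rewrite /plevel; case: ifP => //; case: ifP. Qed.

(* An element of L vanishes outside the strict order: test x against the
   coordinate functional of the entry (i, j), which kills every E_pq, p < q. *)
Lemma gspace_support (x : 'M[F]_n) : (mxvec x <= gspace F r0 r1 r2)%MS ->
  forall i j, ~~ pprec i j -> x i j = 0.
Proof.
move=> xL i j not_ij.
pose c : 'cV[F]_(n * n) := delta_mx (mxvec_index i j) 0.
have /sub_kermxP xc : (mxvec x <= kermx c)%MS.
  apply: submx_trans xL _; apply/sumsmx_subP => p _; apply/sumsmx_subP => q pq.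
  rewrite genmxE; apply/sub_kermxP; rewrite -colE; apply/matrixP => a b.
  rewrite !ord1 !mxE mxvecE mxE.
  case: (eqVneq p i) pq => [->|] //=; case: (eqVneq q j) => [->|] //=.
  by rewrite (negbTE not_ij).
by have := congr1 (fun M : 'M[F]_1 => M 0 0) xc; rewrite -colE !mxE mxvecE.
Qed.

Variable x : 'M[F]_n.
Hypothesis xL : (mxvec x <= gspace F r0 r1 r2)%MS.

(* The transposed bottom-to-middle block: row j (j middle) is column j of x.
   Its row space is the space C of the opening comment, of dimension a. *)
Definition mid_cols : 'M[F]_n := \matrix_(j, i) if lv j == 1%N then x i j else 0.

(* The bottom coordinate space, its complement B to C, and the two spaces
   B (x) <rows of x at middle levels> and C (x) <e_k : k top>. *)
Definition bottom_space : 'M[F]_n := coord_space F [pred i : 'I_n | lv i == 0%N].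
Definition bottom_compl : 'M[F]_n := (bottom_space :\: mid_cols)%MS.
Definition left_part : 'M[F]_(n * n) :=
  (\sum_(j | lv j == 1%N) <<bottom_compl *m outer_mx (row j x)>>)%MS.
Definition right_part : 'M[F]_(n * n) :=
  (\sum_(k | lv k == 2%N) <<mid_cols *m outer_mx (delta_mx 0 k)>>)%MS.

Lemma mid_row_support (q : 'I_n) : lv q = 1%N ->
  forall k, lv k != 2%N -> (row q x) 0 k = 0.
Proof.
move=> q1 k k2; rewrite mxE; apply: (gspace_support xL); rewrite /pprec q1.
by move: k2 (plevel_le2 k); lia.
Qed.

(* x E_pq = (column p of x) (x) e_q lies in C (x) <e_k : k top>. *)
Lemma right_mul_delta_sub (p q : 'I_n) :
  pprec p q -> (mxvec (x *m delta_mx p q) <= right_part)%MS.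
Proof.
rewrite /pprec => pq; have q2 := plevel_le2 q.
have -> : x *m delta_mx p q = col p x *m delta_mx 0 q.
  by rewrite colE -mulmxA mul_delta_mx.
have [p0 | p0] := eqVneq (lv p) 0%N.
  have -> : col p x = 0.
    by apply/matrixP => i j; rewrite !mxE (gspace_support xL) // /pprec p0.
  by rewrite mul0mx linear0 sub0mx.
have p1 : lv p = 1%N by move: pq p0 q2; lia.
have -> : col p x = (row p mid_cols)^T.
  by apply/matrixP => i j; rewrite !mxE p1 eqxx.
apply: (outer_sub_sum (r := delta_mx 0 q)); last exact: row_sub.
move=> k k2; rewrite mxE; case: (eqVneq q k) => [qk|]; last by rewrite andbF.
by move: k2; rewrite -qk; move: pq q2; rewrite p1; lia.
Qed.

Lemma bottom_space_split : (bottom_space <= bottom_compl + mid_cols)%MS.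
Proof.
by rewrite -{1}(addsmx_diff_cap_eq bottom_space mid_cols) addsmxS ?capmxSr.
Qed.

(* E_pq x = e_p (x) (row q of x), and e_p splits along B + C. *)
Lemma left_mul_delta_sub (p q : 'I_n) :
  pprec p q -> (mxvec (delta_mx p q *m x) <= left_part + right_part)%MS.
Proof.
rewrite /pprec => pq; have q2 := plevel_le2 q.
have -> : mxvec (delta_mx p q *m x) = outer (row q x) (delta_mx 0 p).
  by rewrite /outer rowE trmx_delta mulmxA mul_delta_mx.
have [q2' | q2'] := eqVneq (lv q) 2%N.
  have -> : row q x = 0.
    apply/matrixP => i j; rewrite !mxE (gspace_support xL) // /pprec q2'.
    by have := plevel_le2 j; lia.
  by rewrite /outer mulmx0 linear0 sub0mx.
have q1 : lv q = 1%N by move: pq q2 q2'; lia.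
have p_bottom : ((delta_mx 0 p : 'rV[F]_n) <= bottom_space)%MS.
  apply: coord_spaceP => i; rewrite mxE inE /=; case: (eqVneq p i) => [<-|] //=.
  by move: pq; rewrite q1; lia.
have /sub_addsmxP[u ->] := submx_trans p_bottom bottom_space_split.
rewrite linearD /=; apply: addmx_sub.
  apply: submx_trans (addsmxSl _ _); apply: (sumsmx_sup q); first by rewrite q1.
  by rewrite genmxE; apply/outer_sub/submxMl.
apply: submx_trans (addsmxSr _ _).
by apply: outer_sub_sum (mid_row_support q1) _; exact: submxMl.
Qed.

Lemma ad_image_sub :
  (gspace F r0 r1 r2 *m lin_mx (adm x) <= left_part + right_part)%MS.
Proof.
rewrite /gspace sumsmxMr; apply/sumsmx_subP => p _.
rewrite sumsmxMr; apply/sumsmx_subP => q pq.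
rewrite (eqmxMr _ (genmxE _)) mul_vec_lin /adm linearB /=.
apply: addmx_sub; first exact: submx_trans (right_mul_delta_sub pq) (addsmxSr _ _).
by rewrite -scaleN1r; apply/scalemx_sub/left_mul_delta_sub.
Qed.

Lemma mid_cols_sub : (mid_cols <= bottom_space)%MS.
Proof.
apply/row_subP => j; apply: coord_spaceP => i; rewrite inE !mxE.
case: (eqVneq (lv j) 1%N) => // j1 i0; apply: (gspace_support xL).
by rewrite /pprec j1; move: i0; lia.
Qed.

(* a <= r1, since the columns of mid_cols are supported on the middle level. *)
Lemma rank_mid_cols : (\rank mid_cols <= r1)%N.
Proof.
have sub_mid : (mid_cols^T <= coord_space F [pred i : 'I_n | lv i == 1%N])%MS.
  by apply/row_subP => i; apply: coord_spaceP => j; rewrite inE !mxE => /negbTE ->.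
rewrite -mxrank_tr (leq_trans (mxrankS sub_mid)) // (leq_trans (rank_coord_space _ _)) //.
by rewrite card_level.
Qed.

Lemma rank_bottom_compl : (\rank bottom_compl <= r0 - \rank mid_cols)%N.
Proof.
have := mxrank_cap_compl bottom_space mid_cols; rewrite (capmx_idPr mid_cols_sub).1.
move/(canRL (addKn _)) ->; rewrite leq_sub2r // (leq_trans (rank_coord_space _ _)) //.
by rewrite card_level.
Qed.

Lemma ad_rank_le :
  (ad_rank x <= r1 * (r0 - \rank mid_cols) + r2 * \rank mid_cols)%N.
Proof.
apply: leq_trans (mxrankS ad_image_sub) _.
apply: leq_trans (mxrank_adds_leqif _ _).1 _; apply: leq_add.
  apply: leq_trans (rank_sum_outer _ _ _) _.
  by rewrite (card_level r0 r1 r2 1) leq_mul2l rank_bottom_compl orbT.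
by apply: leq_trans (rank_sum_outer _ _ _) _; rewrite (card_level r0 r1 r2 2).
Qed.

End Breadth.

Lemma breadth_tradeoff a r0 r1 r2 : (a <= r1)%N -> (r1 <= r0)%N -> (r1 <= r2)%N ->
  (r1 * (r0 - a) + r2 * a <= r1 * (r0 - r1) + r1 * r2)%N.
Proof. by move=> ? ? ?; nia. Qed.

Theorem theorem4 (F : closedFieldType) (Hchar : [pchar F]%R =i pred0)
  (r0 r1 r2 : nat) (h0 : (1 <= r0)%N) (h1 : (1 <= r1)%N) (h2 : (1 <= r2)%N)
  (h10 : (r1 < r0)%N) (h12 : (r1 < r2)%N) :
  breadth_le F r0 r1 r2 (r1 * (r0 - r1) + r1 * r2).
Proof.
move=> x xL; apply: leq_trans (ad_rank_le xL) _.
by apply: breadth_tradeoff; [exact: rank_mid_cols | exact: ltnW | exact: ltnW].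
Qed.
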